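(* Let $\mathcal B$ be a category with small hom-sets and let $|\text{-}|:\mathcal E\to\mathcal B$ be a concrete category over $\mathcal B$. Then $\mathcal E$ is topological over $\mathcal B$ if and only if the $\mathcal Q_{\mathcal B}$-category $\overline{\mathcal E}$ is total, i.e. the Yoneda $\mathcal Q_{\mathcal B}$-functor $\mathsf Y_{\overline{\mathcal E}}:\overline{\mathcal E}\to\mathsf P\overline{\mathcal E}$ has a left adjoint (equivalently, every presheaf on $\overline{\mathcal E}$ has a supremum).
   Context: A concrete category over $\mathcal B$ is a category $\mathcal E$ with a faithful functor $|\text{-}|:\mathcal E\to\mathcal B$; a map $f:|X|\to|Y|$ in $\mathcal B$ is an $\mathcal E$-morphism if $f=|f'|$ for some $f':X\to Y$ in $\mathcal E$. A structured sink over $T\in\mathrm{ob}\,\mathcal B$ is a (possibly large) family of objects $X_i$ of $\mathcal E$ with maps $f_i:|X_i|\to T$ ($i\in I$); a final lifting is an object $Y$ with $|Y|=T$ such that every $f_i$ is an $\mathcal E$-morphism $X_i\to Y$ and every map $g:T\to|Z|$ is an $\mathcal E$-morphism $Y\to Z$ as soon as all $g\circ f_i$ are $\mathcal E$-morphisms $X_i\to Z$. $\mathcal E$ is topological if every structured sink has a final lifting. A quantaloid is a category whose hom-sets are complete lattices such that composition preserves arbitrary joins in each variable. For $u:S\to T$, $w:S\to U$, define $w\swarrow u:T\to U$ by $v\le w\swarrow u\iff v\circ u\le w$. The free quantaloid $\mathcal Q_{\mathcal B}$ has the objects of $\mathcal B$, $\mathcal Q_{\mathcal B}(S,T)=\{\mathbf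 f\mid \mathbf f\subseteq\mathcal B(S,T)\}$ ordered by inclusion, composition $\mathbf g\circ\mathbf f=\{g\circ f\mid f\in\mathbf f,g\in\mathbf g\}$ and identities $\{1_S\}$. For a quantaloid $\mathcal Q$, a $\mathcal Q$-category $\mathcal E$ consists of a class of objects, an extent $|X|\in\mathrm{ob}\,\mathcal Q$ for each object, and arrows $\mathcal E(X,Y)\in\mathcal Q(|X|,|Y|)$ with $1_{|X|}\le\mathcal E(X,X)$ and $\mathcal E(Y,Z)\circ\mathcal E(X,Y)\le\mathcal E(X,Z)$; a $\mathcal Q$-functor $F:\mathcal E\to\mathcal D$ is an object map with $|FX|=|X|$ and $\mathcal E(X,Y)\le\mathcal D(FX,FY)$; $F\dashv G$ means $\mathcal D(FX,Y)=\mathcal E(X,GY)$ for all $X,Y$. $\overline{\mathcal E}$ is the $\mathcal Q_{\mathcal B}$-category with the objects of $\mathcal E$, extents $|X|$, and $\overline{\mathcal E}(X,Y)$ the set of $\mathcal E$-morphisms $|X|\to|Y|$. A presheaf $\varphi$ of extent $T$ on a $\mathcal Q$-category $\mathcal E$ is a family $\varphi_X:|X|\to T$ ($X\in\mathrm{ob}\,\mathcal E$) with $\varphi_X\circ\mathcal E(X',X)\le\varphi_{X'}$; they form the $\mathcal Q$-category $\mathsf P\mathcal E$ with $|\varphi|=T$ and $\mathsf P\mathcal E(\varphi,\psi)=\bigwedge_X\psi_X\swarrow\varphi_X$. The Yoneda functor is $\mathsf Y_{\mathcal E}Z=\mathcal E(-,Z)$. A supremum of $\varphi$ is an object $Y$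 with $|Y|=|\varphi|$ and $\mathcal E(Y,Z)=\bigwedge_X\mathcal E(X,Z)\swarrow\varphi_X$ for all objects $Z$. *)

Set Implicit Arguments.
Unset Strict Implicit.

Record Cat := {
  ob :> Type;
  hom : ob -> ob -> Type;
  comp : forall a b c : ob, hom b c -> hom a b -> hom a c;
  idm : forall a : ob, hom a a;
  comp_assoc : forall a b c d (f : hom a b) (g : hom b c) (h : hom c d),
      comp h (comp g f) = comp (comp h g) f;
  comp_id_l : forall a b (f : hom a b), comp (idm b) f = f;
  comp_id_r : forall a b (f : hom a b), comp f (idm a) = f
}.
Arguments comp {C} {a b c} g f : rename.
Arguments idm {C} a : rename.
Arguments hom {C} a b : rename.

Record Functor (C D : Cat) := {
  fob :> ob C -> ob D;
  fmap : forall a b : ob C, hom a b -> hom (fob a) (fob b);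
  fmap_id : forall a, fmap (idm a) = idm (fob a);
  fmap_comp : forall a b c (f : hom a b) (g : hom b c),
      fmap (comp g f) = comp (fmap g) (fmap f)
}.
Arguments fmap {C D} F {a b} f : rename.

Definition faithful (C D : Cat) (F : Functor C D) : Prop :=
  forall a b (f g : hom a b), fmap F f = fmap F g -> f = g.

Definition transp (B : Cat) (a a' b b' : ob B) (e1 : a = a') (e2 : b = b')
  (f : hom a b) : hom a' b' :=
  match e1 in _ = x, e2 in _ = y return hom x y with
  | eq_refl, eq_refl => f end.

Definition isEmor (E B : Cat) (U : Functor E B) (X Y : ob E)
  (f : hom (U X) (U Y)) : Prop :=
  exists f' : hom X Y, fmap U f' = f.
Arguments isEmor {E B} U X Y f.

Definition final_lifting (E B : Cat) (U : Functor E B) (T : ob B) (I : Type)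
  (X : I -> ob E) (f : forall i, hom (U (X i)) T) (Y : ob E) (e : U Y = T) : Prop :=
  (forall i, isEmor U (X i) Y (transp eq_refl (eq_sym e) (f i))) /\
  (forall (Z : ob E) (g : hom T (U Z)),
      (forall i, isEmor U (X i) Z (comp g (f i))) ->
      isEmor U Y Z (transp (eq_sym e) eq_refl g)).
Arguments final_lifting {E B} U {T I} X f Y e.

Definition topological (E B : Cat) (U : Functor E B) : Prop :=
  forall (T : ob B) (I : Type) (X : I -> ob E) (f : forall i, hom (U (X i)) T),
    exists (Y : ob E) (e : U Y = T), final_lifting U X f Y e.
Arguments topological {E B} U.

(** * Categories enriched in the free quantaloid Q_B.
    A hom of Q_B(S,T) is a subset of B(S,T), represented as a predicate;
    the order is inclusion and composition is elementwise composition. *)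
Unset Implicit Arguments.
Record QBCat (B : Cat) := {
  qob :> Type;
  ext : qob -> ob B;
  qhom : forall X Y : qob, hom (ext X) (ext Y) -> Prop;
  qhom_id : forall X, qhom X X (idm (ext X));
  qhom_comp : forall X Y Z f g, qhom X Y f -> qhom Y Z g -> qhom X Z (comp g f)
}.
Arguments qob {B} c : rename.
Arguments ext {B} C X : rename.
Arguments qhom {B} C X Y f : rename.
Arguments qhom_id {B} C X : rename.
Arguments qhom_comp {B} C {X Y Z f g} : rename.
Set Implicit Arguments.

Unset Implicit Arguments.
Record QFunctor (B : Cat) (C D : QBCat B) := {
  fo :> qob C -> qob D;
  fext : forall X, ext D (fo X) = ext C X;
  fmono : forall X Y (f : hom (ext C X) (ext C Y)), qhom C X Y f ->
      qhom D (fo X) (fo Y) (transp (eq_sym (fext X)) (eq_sym (fext Y)) f)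
}.
Arguments QFunctor {B} C D.
Arguments fo {B C D} q X : rename.
Arguments fext {B C D} q X : rename.
Arguments fmono {B C D} q {X Y f} : rename.
Set Implicit Arguments.

Definition qadjoint (B : Cat) (C D : QBCat B) (F : QFunctor C D) (G : QFunctor D C) : Prop :=
  forall (X : qob C) (Y : qob D) (f : hom (ext C X) (ext C (fo G Y))),
    qhom D (fo F X) Y (transp (eq_sym (fext F X)) (fext G Y) f) <-> qhom C X (fo G Y) f.

Lemma Ebar_id (E B : Cat) (U : Functor E B) (X : ob E) : isEmor U X X (idm (U X)).
Proof. exists (idm X). apply fmap_id. Qed.

Lemma Ebar_comp (E B : Cat) (U : Functor E B) (X Y Z : ob E) f g :
  isEmor U X Y f -> isEmor U Y Z g -> isEmor U X Z (comp g f).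
Proof.
  intros [f' <-] [g' <-]. exists (comp g' f'). apply fmap_comp.
Qed.

Definition Ebar (E B : Cat) (U : Functor E B) : QBCat B :=
  {| qob := ob E; ext := fob U; qhom := isEmor U;
     qhom_id := Ebar_id U; qhom_comp := @Ebar_comp E B U |}.
Arguments Ebar {E B} U.

Unset Implicit Arguments.
Record presheaf (B : Cat) (C : QBCat B) := {
  pext : ob B;
  pmem : forall X : qob C, hom (ext C X) pext -> Prop;
  pcond : forall (X X' : qob C) (u : hom (ext C X) pext) (h : hom (ext C X') (ext C X)),
      pmem X u -> qhom C X' X h -> pmem X' (comp u h)
}.
Arguments pext {B C} p.
Arguments pmem {B C} p X u.
Arguments presheaf {B} C.
Set Implicit Arguments.

(** PC(phi,psi) = /\_X psi_X <- phi_X = { v | v o phi_X <= psi_X for all X } *)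
Definition Phom (B : Cat) (C : QBCat B) (phi psi : presheaf C)
  (v : hom (pext phi) (pext psi)) : Prop :=
  forall (X : qob C) (u : hom (ext C X) (pext phi)), pmem phi X u -> pmem psi X (comp v u).
Arguments Phom {B C} phi psi v.

Lemma Phom_id (B : Cat) (C : QBCat B) (phi : presheaf C) : Phom phi phi (idm (pext phi)).
Proof. intros X u Hu. rewrite comp_id_l. exact Hu. Qed.

Lemma Phom_comp (B : Cat) (C : QBCat B) (phi psi chi : presheaf C) f g :
  Phom phi psi f -> Phom psi chi g -> Phom phi chi (comp g f).
Proof. intros Hf Hg X u Hu. rewrite <- comp_assoc. apply Hg, Hf, Hu. Qed.

Definition PC (B : Cat) (C : QBCat B) : QBCat B :=
  {| qob := presheaf C; ext := @pext B C; qhom := @Phom B C;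
     qhom_id := @Phom_id B C; qhom_comp := @Phom_comp B C |}.

Definition yon_psh (B : Cat) (C : QBCat B) (Z : qob C) : presheaf C.
Proof.
  refine {| pext := ext C Z; pmem := fun X u => qhom C X Z u |}.
  intros X X' u h Hu Hh. exact (qhom_comp C Hh Hu).
Defined.

Lemma yoneda_mono (B : Cat) (C : QBCat B) (X Y : qob C) (f : hom (ext C X) (ext C Y)) :
  qhom C X Y f -> qhom (PC C) (yon_psh X) (yon_psh Y)
                   (transp (eq_sym (eq_refl (ext C X))) (eq_sym (eq_refl (ext C Y))) f).
Proof. simpl. intros Hf Z u Hu. exact (qhom_comp C Hu Hf). Qed.

Definition yoneda (B : Cat) (C : QBCat B) : QFunctor C (PC C) :=
  {| fo := (@yon_psh B C : qob C -> qob (PC C)); fext := fun X => eq_refl; fmono := @yoneda_mono B C |}.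

Definition total (B : Cat) (C : QBCat B) : Prop :=
  exists F : QFunctor (PC C) C, qadjoint F (yoneda C).

(* Both conditions say that every presheaf on the Q_B-category E-bar has a
   supremum.  A presheaf phi of extent T is a downward closed family of maps
   into T, so it is itself a (large) structured sink, and a final lifting of
   that sink is exactly a supremum of phi; conversely every structured sink
   generates a presheaf, namely its closure under precomposition with
   E-morphisms, and a supremum of it is a final lifting of the sink.  On the
   enriched side, a left adjoint of Yoneda picks a supremum of each presheaf,
   and chosen suprema are automatically functorial. *)
From Stdlib Require Import ClassicalEpsilon.

Lemma transp_comp_l (B : Cat) (a b b' c : ob B) (e : b = b') (v : hom a b) (u : hom c a) :
  transp eq_refl e (comp v u) = comp (transp eq_refl e v) u.
Proof. destruct e; reflexivity. Qed.

Lemma transp_trans (B : Cat) (a a' b b' : ob B) (e1 : a = a') (e2 : b = b') (v : hom a b) :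
  transp e1 eq_refl (transp eq_refl e2 v) = transp e1 e2 v.
Proof. destruct e1, e2; reflexivity. Qed.

Lemma transp_comp_cancel (B : Cat) (a a' b c : ob B) (e : a = a') (f : hom a b) (u : hom c a) :
  comp (transp e eq_refl f) (transp eq_refl e u) = comp f u.
Proof. destruct e; reflexivity. Qed.

Lemma transp_idm (B : Cat) (a a' : ob B) (e : a = a') :
  transp e eq_refl (transp eq_refl e (idm a)) = idm a'.
Proof. destruct e; reflexivity. Qed.

Section Suprema.
Context {B : Cat} {C : QBCat B}.

Definition is_supremum (phi : presheaf C) (Y : qob C) (e : ext C Y = pext phi) : Prop :=
  forall (Z : qob C) (g : hom (pext phi) (ext C Z)),
    qhom C Y Z (transp (eq_sym e) eq_refl g) <-> Phom phi (yon_psh Z) g.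

Lemma supremum_ub {phi : presheaf C} {Y e} {X : qob C} {u : hom (ext C X) (pext phi)} :
  is_supremum phi Y e -> pmem phi X u -> qhom C X Y (transp eq_refl (eq_sym e) u).
Proof.
  intros Hsup Hu.
  pose proof (proj1 (Hsup Y (transp eq_refl (eq_sym e) (idm _)))) as Hid.
  rewrite transp_idm in Hid.
  pose proof (Hid (qhom_id C Y) X u Hu) as Hyon.
  rewrite <- transp_comp_l, comp_id_l in Hyon. exact Hyon.
Qed.

Lemma supremum_mono {phi psi : presheaf C} {Y e Y' e'} {f : hom (pext phi) (pext psi)} :
  is_supremum phi Y e -> is_supremum psi Y' e' -> Phom phi psi f ->
  qhom C Y Y' (transp (eq_sym e) (eq_sym e') f).
Proof.
  intros Hphi Hpsi Hf. rewrite <- transp_trans. apply Hphi.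
  intros X u Hu. rewrite <- transp_comp_l.
  exact (supremum_ub Hpsi (Hf X u Hu)).
Qed.

(* The adjunction condition at the presheaf phi is literally [is_supremum]. *)
Lemma qadjoint_yoneda_iff (F : QFunctor (PC C) C) :
  qadjoint F (yoneda C) <-> forall phi : presheaf C, is_supremum phi (F phi) (fext F phi).
Proof. split; intros H; exact H. Qed.

Lemma total_iff_suprema :
  total C <-> forall phi : presheaf C, exists Y e, is_supremum phi Y e.
Proof.
  split.
  - intros [F HF] phi. exists (F phi), (fext F phi).
    exact (proj1 (qadjoint_yoneda_iff F) HF phi).
  - intros Hsup.
    assert (choice : forall phi : presheaf C, {Y : qob C & {e | is_supremum phi Y e}}).
    { intros phi.
      destruct (constructive_indefinite_description _ (Hsup phi)) as [Y HY].
      destruct (constructive_indefinite_description _ HY) as [e He].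
      exact (existT _ Y (exist _ e He)). }
    exists (Build_QFunctor B (PC C) C (fun phi => projT1 (choice phi))
              (fun phi => proj1_sig (projT2 (choice phi)))
              (fun phi psi f Hf => supremum_mono (proj2_sig (projT2 (choice phi)))
                                                 (proj2_sig (projT2 (choice psi))) Hf)).
    apply qadjoint_yoneda_iff. intros phi. exact (proj2_sig (projT2 (choice phi))).
Qed.

End Suprema.

Section Topological.
Context {B E : Cat} {U : Functor E B}.

Definition sink_presheaf {T : ob B} {I : Type} (X : I -> ob E)
    (f : forall i, hom (U (X i)) T) : presheaf (Ebar U).
Proof.
  refine {| pext := T;
            pmem := fun (Z : qob (Ebar U)) (u : hom (U Z) T) =>
              exists i h, isEmor U Z (X i) h /\ u = comp (f i) h |}.
  intros Z Z' u h [i [h0 [Hh0 ->]]] Hh. exists i, (comp h0 h). split.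
  - exact (Ebar_comp Hh Hh0).
  - symmetry. apply comp_assoc.
Defined.

Definition presheaf_index (phi : presheaf (Ebar U)) : Type :=
  {Z : ob E & {u : hom (U Z) (pext phi) | pmem phi Z u}}.

Definition presheaf_sink_ob {phi : presheaf (Ebar U)} (i : presheaf_index phi) : ob E :=
  projT1 i.

Definition presheaf_sink {phi : presheaf (Ebar U)} (i : presheaf_index phi) :
  hom (U (presheaf_sink_ob i)) (pext phi) :=
  proj1_sig (projT2 i).

Lemma supremum_final_lifting {T : ob B} {I : Type} {X : I -> ob E}
    {f : forall i, hom (U (X i)) T} {Y : ob E} {e : U Y = T} :
  is_supremum (sink_presheaf X f) Y e -> final_lifting U X f Y e.
Proof.
  intros Hsup. split.
  - intros i. apply (supremum_ub (phi := sink_presheaf X f) (X := X i) Hsup).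
    exists i, (idm _). split.
    + apply Ebar_id.
    + symmetry. apply comp_id_r.
  - intros Z g Hg. apply Hsup. intros W u [i [h [Hh ->]]]. cbn.
    rewrite comp_assoc. exact (Ebar_comp Hh (Hg i)).
Qed.

Lemma final_lifting_supremum {phi : presheaf (Ebar U)} {Y : ob E} {e : U Y = pext phi} :
  final_lifting U (presheaf_sink_ob (phi:=phi)) (presheaf_sink (phi:=phi)) Y e ->
  is_supremum phi Y e.
Proof.
  intros [Hmem Hfinal] Z g. split.
  - intros Hg X u Hu. cbn.
    pose proof (Hmem (existT _ X (exist _ u Hu))) as HuY.
    pose proof (Ebar_comp HuY Hg) as HuZ.
    rewrite transp_comp_cancel in HuZ. exact HuZ.
  - intros Hg. apply Hfinal. intros [X [u Hu]]. exact (Hg X u Hu).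
Qed.

Lemma topological_iff_suprema :
  topological U <-> forall phi : presheaf (Ebar U), exists Y e, is_supremum phi Y e.
Proof.
  split.
  - intros Htop phi.
    destruct (Htop _ _ (presheaf_sink_ob (phi:=phi)) (presheaf_sink (phi:=phi))) as [Y [e He]].
    exists Y, e. exact (final_lifting_supremum He).
  - intros Hsup T I X f.
    destruct (Hsup (sink_presheaf X f)) as [Y [e He]].
    exists Y, e. exact (supremum_final_lifting He).
Qed.

End Topological.

Theorem theorem3p2 (B E : Cat) (U : Functor E B) (HU : faithful U) :
  topological U <-> total (Ebar U).
Proof.
  rewrite topological_iff_suprema, total_iff_suprema. reflexivity.
Qed.
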